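(* The $k$-clique problem can be solved by a $(k+1)$-memory TM-TLM in $(k^2n^k,\,k^2n^k)$-time, i.e. with time complexity $O(k^2n^k)$ and IO complexity $O(k^2n^k)$, where $n$ is the number of vertices of the input graph.
   Context: The $k$-clique problem: given a graph $G$ with $n$ vertices and an integer $k$, decide whether $G$ contains a clique on $k$ vertices. A Turing machine with two-level memory (TM-TLM) with main memory size $M$ has a main memory tape of $M$ cells, an unbounded external memory tape, and an address tape for the external memory; it has a finite state set, alphabets, and a transition function $\delta: Q\times\Gamma\to Q\times\Gamma\times\{L,S,R\}$ acting on the main memory tape, plus special read and write states: on entering a read state the machine writes an address $addr$ on the address tape and the main memory cell under the head receives the content of external cell $addr$; on entering a write state, external cell $addr$ receives the content of the main memory cell under the head. Each Read/Write is one IO operation of unit cost. Time = number of transitions other than Read/Write operations; IO time = number of Read/Write operations. A $k$-memory $(T(n),IO(n))$-time TM-TLM has main memory size $k$, time complexity $O(T(n))$ and IO complexity $O(IO(n))$. The input graph is stored on the external memory tape, and (by tape compression) the identifier of a vertex or an edge is assumed to fit in a single tape cell. *)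

From mathcomp Require Import all_boot.
Set Implicit Arguments. Unset Strict Implicit. Unset Printing Implicit Defensive.

Inductive move := MvL | MvS | MvR.

(* operation on the (write-only) address tape performed by an ordinary
   transition: leave it unchanged, write a symbol in the next cell, or erase it *)
Inductive addr_op (A : Type) := AKeep | APush of A | AClear.
Arguments AKeep {A}. Arguments AClear {A}.

Inductive kind := KNormal | KRead | KWrite | KAccept | KReject.

(* A TM-TLM with state set Q, tape alphabet 'I_N and main memory of M cells. *)
Record tmtlm (Q : finType) (N M : nat) := TMTLM {
  q_init : Q;
  q_kind : Q -> kind;
  delta : Q -> 'I_N -> Q * 'I_N * move * addr_op 'I_N;
  q_next : Q -> Q }.

Record config (Q : finType) (N M : nat) := Config {
  c_state : Q;
  c_head  : 'I_M;
  c_mem   : 'I_M -> 'I_N;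
  c_addr  : seq 'I_N;
  c_ext   : nat -> 'I_N }.

Definition mv_head (M : nat) (h : 'I_M) (m : move) : 'I_M :=
  match m with
  | MvS => h
  | MvL => insubd h h.-1
  | MvR => insubd h h.+1
  end.

Definition upd (T : eqType) (A : Type) (f : T -> A) (x : T) (a : A) : T -> A :=
  fun y => if y == x then a else f y.

(* the address written on the address tape, read as a base-N number
   (first written cell = least significant digit) *)
Definition addr_val (N : nat) (w : seq 'I_N) : nat :=
  foldr (fun a acc => nat_of_ord a + N * acc) 0 w.

Definition apply_addr_op (N : nat) (w : seq 'I_N) (o : addr_op 'I_N) : seq 'I_N :=
  match o with AKeep => w | APush s => rcons w s | AClear => [::] end.

(* One step. The boolean is [true] for an IO operation (Read/Write) and
   [false] for an ordinary transition (counted in time). *)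
Definition step (Q : finType) (N M : nat) (T : tmtlm Q N M) (c : config Q N M)
  : option (config Q N M * bool) :=
  let q := c_state c in
  let h := c_head c in
  match q_kind T q with
  | KAccept | KReject => None
  | KNormal =>
      let '(q', s, m, o) := delta T q (c_mem c h) in
      Some (Config q' (mv_head h m) (upd (c_mem c) h s)
                   (apply_addr_op (c_addr c) o) (c_ext c), false)
  | KRead =>
      Some (Config (q_next T q) h (upd (c_mem c) h (c_ext c (addr_val (c_addr c))))
                   (c_addr c) (c_ext c), true)
  | KWrite =>
      Some (Config (q_next T q) h (c_mem c) (c_addr c)
                   (upd (c_ext c) (addr_val (c_addr c)) (c_mem c h)), true)
  end.

(* runs T c t io c' : from c the machine reaches c' using t ordinary
   transitions (time) and io Read/Write operations (IO time) *)
Inductive runs (Q : finType) (N M : nat) (T : tmtlm Q N M)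
  : config Q N M -> nat -> nat -> config Q N M -> Prop :=
| runs_refl c : runs T c 0 0 c
| runs_time c c' t io c'' :
    step T c = Some (c', false) -> runs T c' t io c'' -> runs T c t.+1 io c''
| runs_io c c' t io c'' :
    step T c = Some (c', true) -> runs T c' t io c'' -> runs T c t io.+1 c''.

Definition halted (Q : finType) (N M : nat) (T : tmtlm Q N M) (c : config Q N M) :=
  match q_kind T (c_state c) with KAccept | KReject => true | _ => false end.

Definition accepted (Q : finType) (N M : nat) (T : tmtlm Q N M) (c : config Q N M) :=
  match q_kind T (c_state c) with KAccept => true | _ => false end.

(* Alphabet for inputs with n vertices: 'I_(n*n).+2, so that the identifier of
   a vertex or of an edge (a pair of vertices) fits in one cell (tape compression). *)
Notation alph n := (n * n).+2.

(* Encoding of the input graph on the external memory tape: adjacency matrix,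
   the entry for (u,v) is stored at address u + (n*n+2) * v, as symbol 1 (edge)
   or 0 (no edge); all other cells are blank (0). *)
Definition input_ext (n : nat) (G : rel 'I_n) (a : nat) : 'I_(alph n) :=
  match insub (a %% alph n), insub (a %/ alph n) with
  | Some u, Some v => if G u v then inord 1 else ord0
  | _, _ => ord0
  end.

Definition init_config (Q : finType) (n M : nat) (T : tmtlm Q (alph n) M.+1)
  (G : rel 'I_n) : config Q (alph n) M.+1 :=
  Config (q_init T) ord0 (fun _ => ord0) [::] (input_ext G).

Definition has_clique (n : nat) (G : rel 'I_n) (k : nat) : Prop :=
  exists S : {set 'I_n}, #|S| = k /\ {in S &, forall u v, u != v -> G u v}.

From HB Require Import structures.
From mathcomp Require Import all_boot zify.
From Stdlib Require Import FunctionalExtensionality.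

Set Implicit Arguments. Unset Strict Implicit. Unset Printing Implicit Defensive.

(* The machine runs the backtracking search for a sequence y_0, ..., y_(k-1) of
   pairwise adjacent vertices, which by irreflexivity and symmetry is the same as
   a k-clique. Cells 0..k-1 of the main memory hold the current prefix, and cell k
   receives what is read. The finite control remembers the level d, the index i
   of the prefix entry compared next with y_d, and the head position, so the head
   is steered without marks on the tape. Testing y_i ~ y_d pushes y_i and y_d on
   the address tape (one cell each, by tape compression) and reads one entry of
   the adjacency matrix: O(k) moves and a single IO. Each of the at most n^(d+1)
   candidates at level d thus costs O(k^2) outside the search below it, for a
   total of O(k^2 n^k) steps, IO operations included. *)

Lemma upd_id (T : eqType) (A : Type) (f : T -> A) x : upd f x (f x) = f.
Proof. by apply: functional_extensionality => y; rewrite /upd; case: eqP => [->|]. Qed.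

Section Reach.
Variables (Q : finType) (N M : nat) (T : tmtlm Q N M).

Lemma runs_trans c1 t1 io1 c2 t2 io2 c3 :
  runs T c1 t1 io1 c2 -> runs T c2 t2 io2 c3 -> runs T c1 (t1 + t2) (io1 + io2) c3.
Proof.
elim=> [c|c c' t io c'' S _ IH|c c' t io c'' S _ IH] R2 //; rewrite addSn.
- exact: runs_time S (IH R2).
- exact: runs_io S (IH R2).
Qed.

Definition reach (c c' : config Q N M) (m : nat) :=
  exists t io, runs T c t io c' /\ t + io <= m.

Lemma reach0 c : reach c c 0.
Proof. by exists 0, 0; split; first exact: runs_refl. Qed.

Lemma reach_trans c1 c2 c3 m1 m2 :
  reach c1 c2 m1 -> reach c2 c3 m2 -> reach c1 c3 (m1 + m2).
Proof.
move=> [t1 [io1 [R1 le1]]] [t2 [io2 [R2 le2]]].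
by exists (t1 + t2), (io1 + io2); split; [exact: runs_trans R1 R2 | lia].
Qed.

Lemma reach_widen c c' m m' : m <= m' -> reach c c' m -> reach c c' m'.
Proof. by move=> le [t [io [R le']]]; exists t, io; split => //; lia. Qed.

Lemma reach_step c c' b c'' m :
  step T c = Some (c', b) -> reach c' c'' m -> reach c c'' m.+1.
Proof.
move=> S [t [io [R le]]]; case: b S => S.
  by exists t, io.+1; split; [exact: runs_io S R | lia].
by exists t.+1, io; split; [exact: runs_time S R | lia].
Qed.

End Reach.

Inductive phase :=
  Start | Enter | Scan | PushRow | PushCol | Query | Test | Advance | Accept | Reject.

Definition phase_code (ph : phase) : 'I_10 :=
  inord (match ph with Start => 0 | Enter => 1 | Scan => 2 | PushRow => 3
         | PushCol => 4 | Query => 5 | Test => 6 | Advance => 7 | Accept => 8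
         | Reject => 9 end).

Definition code_phase (o : 'I_10) : phase :=
  match val o with 0 => Start | 1 => Enter | 2 => Scan | 3 => PushRow
  | 4 => PushCol | 5 => Query | 6 => Test | 7 => Advance | 8 => Accept
  | _ => Reject end.

Lemma phase_codeK : cancel phase_code code_phase.
Proof. by case; rewrite /code_phase /phase_code /= inordK. Qed.

HB.instance Definition _ := Finite.copy phase (can_type phase_codeK).

Section CliqueMachine.
Variables k n : nat.
Local Notation K := k.+1.
Local Notation N := (alph n).

(* (phase, d, i, p): search level d, next prefix index i, head position p *)
Definition ctrl := (phase * 'I_K * 'I_K * 'I_K)%type.

Definition target (s : ctrl) : nat :=
  let: (ph, d, i, p) := s in
  match ph with Enter | PushCol | Advance => d | PushRow => i | Query => k | _ => p end.

(* Halting in the initial state settles k = 0 and n < k at no cost; some such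
   shortcut is forced since the bound k^2 n^k vanishes for n = 0. *)
Definition ctrl_kind (s : ctrl) : kind :=
  let: (ph, _, _, p) := s in
  match ph with
  | Start => if k == 0 then KAccept else if n < k then KReject else KNormal
  | Query => if p == k :> nat then KRead else KNormal
  | Accept => KAccept
  | Reject => KReject
  | _ => KNormal
  end.

Definition act (s : ctrl) (x : 'I_N) : ctrl * 'I_N * move * addr_op 'I_N :=
  let: (ph, d, i, p) := s in
  match ph with
  | Start => (Enter, ord0, ord0, p, x, MvS, AKeep)
  | Enter => (Scan, d, ord0, p, ord0, MvS, AKeep)
  | Scan => if i < d then (PushRow, d, i, p, x, MvS, AKeep)
            else if d.+1 == k then (Accept, d, i, p, x, MvS, AKeep)
            else (Enter, inord d.+1, i, p, x, MvS, AKeep)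
  | PushRow => (PushCol, d, i, p, x, MvS, APush x)
  | PushCol => (Query, d, i, p, x, MvS, APush x)
  | Test => if x == 1 :> nat then (Scan, d, inord i.+1, p, x, MvS, AClear)
            else (Advance, d, i, p, x, MvS, AClear)
  | Advance => if x.+1 < n then (Scan, d, ord0, p, inord x.+1, MvS, AKeep)
               else if d == 0 :> nat then (Reject, d, i, p, x, MvS, AKeep)
               else (Advance, inord d.-1, i, p, x, MvS, AKeep)
  | _ => (s, x, MvS, AKeep)
  end.

Definition transition (s : ctrl) (x : 'I_N) : ctrl * 'I_N * move * addr_op 'I_N :=
  let: (ph, d, i, p) := s in
  if p < target s then (ph, d, i, inord p.+1, x, MvR, AKeep)
  else if target s < p then (ph, d, i, inord p.-1, x, MvL, AKeep)
  else act s x.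

Definition after_read (s : ctrl) : ctrl := let: (_, d, i, p) := s in (Test, d, i, p).

Definition clique_machine : tmtlm ctrl N K :=
  {| q_init := (Start, ord0, ord0, ord0); q_kind := ctrl_kind;
     delta := transition; q_next := after_read |}.

Variable G : rel 'I_n.
Local Notation ext := (input_ext G).
Local Notation reach := (reach clique_machine).

Definition cfg ph (d i p : 'I_K) mem (a : seq 'I_N) : config ctrl N K :=
  Config (ph, d, i, p) p mem a ext.

Lemma step_normal s h mem a e : ctrl_kind s = KNormal ->
  step clique_machine (Config s h mem a e) =
  let '(s', x, m, o) := transition s (mem h) in
  Some (Config s' (mv_head h m) (upd mem h x) (apply_addr_op a o) e, false).
Proof. by move=> normal; rewrite /step /= normal. Qed.

Lemma step_act ph d i (p : 'I_K) mem a :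
  ctrl_kind (ph, d, i, p) = KNormal -> target (ph, d, i, p) = p ->
  step clique_machine (cfg ph d i p mem a) =
  let '(s', x, m, o) := act (ph, d, i, p) (mem p) in
  Some (Config s' (mv_head p m) (upd mem p x) (apply_addr_op a o) ext, false).
Proof. by move=> normal at_p; rewrite step_normal // /transition at_p ltnn. Qed.

Lemma goto ph d i (p t : 'I_K) mem a :
  (forall q : 'I_K, target (ph, d, i, q) = t) ->
  (forall q : 'I_K, q != t -> ctrl_kind (ph, d, i, q) = KNormal) ->
  reach (cfg ph d i p mem a) (cfg ph d i t mem a) k.
Proof.
move=> tgt normal.
suff walk m (q : 'I_K) : (t - q) + (q - t) <= m ->
    reach (cfg ph d i q mem a) (cfg ph d i t mem a) m.
  by apply: walk; have := ltn_ord p; have := ltn_ord t; lia.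
elim: m q => [|m IH] q dist.
  have -> : q = t by apply: ord_inj; lia.
  exact: reach0.
case: (ltngtP q t) => [lt|gt|/val_inj ->]; last exact: reach_widen (reach0 _ _).
- have lt1 : q.+1 < K by rewrite ltnS (leq_trans lt) // -ltnS.
  apply: reach_step (IH (inord q.+1) _); last by rewrite inordK; lia.
  rewrite step_normal ?normal ?neq_ltn ?lt // /transition tgt lt /= upd_id.
  suff -> : insubd q q.+1 = inord q.+1 by [].
  by apply: ord_inj; rewrite val_insubd lt1 inordK.
- have lt1 : q.-1 < K by rewrite (leq_ltn_trans (leq_pred _)).
  apply: reach_step (IH (inord q.-1) _); last by rewrite inordK //; lia.
  rewrite step_normal ?normal ?neq_ltn ?gt ?orbT // /transition tgt gt ltnNge ltnW //=.
  rewrite upd_id; suff -> : insubd q q.-1 = inord q.-1 by [].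
  by apply: ord_inj; rewrite val_insubd lt1 inordK.
Qed.

Definition edge (u v : nat) : bool :=
  match (insub u : option 'I_n), (insub v : option 'I_n) with
  | Some a, Some b => G a b
  | _, _ => false
  end.

Lemma edge_ord (a b : 'I_n) : edge a b = G a b.
Proof. by rewrite /edge !valK. Qed.

Lemma read_edge (u v : 'I_N) : (ext (addr_val [:: u; v]) == 1 :> nat) = edge u v.
Proof.
rewrite /input_ext /addr_val /= muln0 addn0.
have -> : (u + N * v) %% N = u by rewrite addnC mulnC modnMDl modn_small.
have -> : (u + N * v) %/ N = v by rewrite addnC mulnC divnMDl // divn_small ?addn0.
rewrite /edge; case: (insub (nat_of_ord u) : option 'I_n) => [a|];
  case: (insub (nat_of_ord v) : option 'I_n) => [b|] //.
by case: (G a b); rewrite ?inordK.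
Qed.

Lemma test_edge (d i p : 'I_K) mem : i < d -> d < k ->
  let mem' := upd mem ord_max (ext (addr_val [:: mem i; mem d])) in
  reach (cfg Scan d i p mem [::])
    (if edge (mem i) (mem d) then cfg Scan d (inord i.+1) ord_max mem' [::]
     else cfg Advance d i ord_max mem' [::]) (3 * k + 5).
Proof.
move=> lt_id lt_dk mem'.
have scan : step clique_machine (cfg Scan d i p mem [::]) =
    Some (cfg PushRow d i p mem [::], false).
  by rewrite step_act //= lt_id upd_id.
have push_row : step clique_machine (cfg PushRow d i i mem [::]) =
    Some (cfg PushCol d i i mem [:: mem i], false).
  by rewrite step_act //= upd_id.
have push_col : step clique_machine (cfg PushCol d i d mem [:: mem i]) =
    Some (cfg Query d i d mem [:: mem i; mem d], false).
  by rewrite step_act //= upd_id.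
have read : step clique_machine (cfg Query d i ord_max mem [:: mem i; mem d]) =
    Some (cfg Test d i ord_max mem' [:: mem i; mem d], true).
  by rewrite /step /= eqxx.
have test : step clique_machine (cfg Test d i ord_max mem' [:: mem i; mem d]) =
    Some (if edge (mem i) (mem d) then cfg Scan d (inord i.+1) ord_max mem' [::]
          else cfg Advance d i ord_max mem' [::], false).
  have -> : step clique_machine (cfg Test d i ord_max mem' [:: mem i; mem d]) =
      Some (if mem' ord_max == 1 :> nat then cfg Scan d (inord i.+1) ord_max mem' [::]
            else cfg Advance d i ord_max mem' [::], false).
    by rewrite step_act //=; case: ifP; rewrite upd_id.
  by rewrite {1}/mem' /upd eqxx read_edge.
have to_query : reach (cfg Query d i d mem [:: mem i; mem d])
    (cfg Query d i ord_max mem [:: mem i; mem d]) k.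
  apply: goto => // q /= /eqP ne_q; case: eqP => // eq_q.
  by case: ne_q; apply: ord_inj.
apply: reach_widen (reach_step scan (reach_trans (goto _ _ _ _ _) (reach_step push_row
  (reach_trans (goto _ _ _ _ _) (reach_step push_col (reach_trans to_query
  (reach_step read (reach_step test (reach0 _ _))))))))) => //; lia.
Qed.

Definition fits (mem : 'I_K -> 'I_N) (d : 'I_K) (i : nat) : bool :=
  [forall j : 'I_K, (i <= j < d) ==> edge (mem j) (mem d)].

Definition agree (m1 m2 : 'I_K -> 'I_N) (d : nat) := forall j : 'I_K, j < d -> m1 j = m2 j.

Lemma agree_trans m1 m2 m3 d : agree m1 m2 d -> agree m2 m3 d -> agree m1 m3 d.
Proof. by move=> e12 e23 j lt_jd; rewrite e12 ?e23. Qed.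

Lemma agree_le m1 m2 d d' : d' <= d -> agree m1 m2 d -> agree m1 m2 d'.
Proof. by move=> le_d'd e j lt_jd'; apply: e; apply: leq_trans le_d'd. Qed.

Lemma agree_upd mem (d : 'I_K) x : agree (upd mem d x) mem d.
Proof. by move=> j lt_jd; rewrite /upd; case: eqP => // eq_jd; rewrite eq_jd ltnn in lt_jd. Qed.

Lemma fitsS mem (d i : 'I_K) : i < d -> fits mem d i = edge (mem i) (mem d) && fits mem d i.+1.
Proof.
move=> lt_id; apply/forallP/andP => [ok | [ok_i /forallP ok] j].
  split; first by have := ok i; rewrite leqnn lt_id.
  by apply/forallP => j; apply/implyP => /andP [lt_ij lt_jd]; have := ok j; rewrite lt_jd (ltnW lt_ij).
apply/implyP; rewrite leq_eqVlt => /andP [/orP [/eqP/ord_inj <- // | lt_ij] lt_jd].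
by have := ok j; rewrite lt_ij lt_jd.
Qed.

Lemma eq_fits m1 m2 (d : 'I_K) i : agree m1 m2 k -> d < k -> fits m1 d i = fits m2 d i.
Proof.
move=> e lt_dk; apply: eq_forallb => j; rewrite (e d) //.
case: (ltnP j d) => [lt_jd | le_dj]; last by rewrite andbF.
by rewrite (e j) // (ltn_trans lt_jd).
Qed.

Lemma check_loop (d : 'I_K) m : d < k -> forall (i p : 'I_K) mem, d - i = m -> i <= d ->
  exists (i' p' : 'I_K) mem', agree mem' mem k /\
    reach (cfg Scan d i p mem [::])
      (if fits mem d i then cfg Scan d d p' mem' [::] else cfg Advance d i' p' mem' [::])
      (m * (3 * k + 5)).
Proof.
move=> lt_dk; elim: m => [|m IH] i p mem dist le_id.
  have -> : i = d by apply: ord_inj; lia.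
  exists d, p, mem; split => //.
  have -> : fits mem d d by apply/forallP => j; rewrite ltnNge andbN.
  exact: reach0.
have lt_id : i < d by lia.
have := test_edge p mem lt_id lt_dk; set mem1 := upd _ _ _ => test.
have agree1 : agree mem1 mem k := agree_upd _ _.
rewrite fitsS // -(@eq_fits mem1 mem d i.+1 agree1 lt_dk).
case: (edge (mem i) (mem d)) test => /= test; last first.
  by exists i, ord_max, mem1; split => //; apply: reach_widen test; lia.
have lt_iK : i.+1 < K by lia.
have dist1 : d - @inord k i.+1 = m by rewrite inordK; lia.
have le_i1d : @inord k i.+1 <= d by rewrite inordK.
have [i' [p' [mem' [agree' R]]]] := IH _ ord_max mem1 dist1 le_i1d.
rewrite inordK // in R.
exists i', p', mem'; split; first exact: agree_trans agree' agree1.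
by apply: reach_widen (reach_trans test R); lia.
Qed.

Definition prefix_clique (mem : 'I_K -> 'I_N) (d : nat) :=
  (forall j : 'I_K, j < d -> mem j < n) /\
  (forall a b : 'I_K, a < b -> b < d -> edge (mem a) (mem b)).

Definition clique_seq (y : nat -> nat) :=
  (forall j, j < k -> y j < n) /\ (forall a b, a < b -> b < k -> edge (y a) (y b)).

Definition extends (y : nat -> nat) (mem : 'I_K -> 'I_N) (d : nat) :=
  forall j : 'I_K, j < d -> y j = mem j.

Definition completable mem d x := exists2 y, clique_seq y & extends y mem d /\ x <= y d.

Lemma prefix_clique_agree m1 m2 d : agree m1 m2 d -> prefix_clique m2 d -> prefix_clique m1 d.
Proof.
move=> e [lt_n adj]; split => [j lt_jd | a b lt_ab lt_bd]; first by rewrite e // lt_n.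
by rewrite !e // ?adj // (ltn_trans lt_ab).
Qed.

Lemma prefix_clique_fits mem (d : 'I_K) :
  prefix_clique mem d -> mem d < n -> fits mem d 0 -> prefix_clique mem d.+1.
Proof.
move=> [lt_n adj] lt_dn /forallP ok; split => [j | a b lt_ab].
  by rewrite ltnS leq_eqVlt => /orP [/eqP/ord_inj -> // | /lt_n].
rewrite ltnS leq_eqVlt => /orP [/eqP/ord_inj eq_bd | lt_bd]; last exact: adj.
by have := ok a; rewrite -eq_bd lt_ab.
Qed.

Lemma completable_agree m1 m2 d x : agree m1 m2 d -> completable m1 d x <-> completable m2 d x.
Proof.
by move=> e; split=> [[y cl [ext le]] | [y cl [ext le]]]; exists y => //; split => // j lt_jd;
  rewrite ext // e.
Qed.

Lemma completable_split mem (d : 'I_K) :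
  completable mem d (mem d) <-> completable mem d.+1 0 \/ completable mem d (mem d).+1.
Proof.
split => [[y cl [ext le]] | [[y cl [ext _]] | [y cl [ext le]]]].
- case: (ltngtP (mem d) (y d)) le => // [lt _ | eq_d _]; first by right; exists y.
  left; exists y => //; split => // j; rewrite ltnS leq_eqVlt => /orP [/eqP/ord_inj -> // | ].
  exact: ext.
- by exists y => //; split => [j lt_jd | ]; rewrite ext // ltnS ?leqnn // ltnW.
- by exists y => //; split => //; apply: ltnW.
Qed.

Lemma completable_ge mem d x : d < k -> n <= x -> ~ completable mem d x.
Proof. by move=> lt_dk le_nx [y [lt_n _] [_ le]]; have := lt_n d lt_dk; lia. Qed.

Lemma completable_fits mem (d : 'I_K) : d < k -> completable mem d.+1 0 -> fits mem d 0.
Proof.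
move=> lt_dk [y [_ adj] [ext _]]; apply/forallP => j; apply/implyP => /= lt_jd.
by rewrite -!ext ?adj // ltnW.
Qed.

Lemma completable_prefix mem : prefix_clique mem k -> completable mem k 0.
Proof.
move=> [lt_n adj]; exists (fun j => mem (inord j)); last first.
  by split => // j _; rewrite inord_val.
split => [j lt_jk | a b lt_ab lt_bk].
  by have := lt_n (inord j); rewrite inordK //; [apply | lia].
by have := adj (inord a) (inord b); rewrite !inordK //; [apply | lia..].
Qed.

Definition backtracked (d : nat) mem (c : config ctrl N K) :=
  if d == 0 then ctrl_kind (c_state c) = KReject
  else exists (i p : 'I_K) mem', c = cfg Advance (inord d.-1) i p mem' [::] /\ agree mem' mem d.

Definition searches (d : 'I_K) mem (p : 'I_K) cost := exists2 c,
  reach (cfg Scan d ord0 p mem [::]) c cost &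
  completable mem d (mem d) /\ ctrl_kind (c_state c) = KAccept \/
  ~ completable mem d (mem d) /\ backtracked d mem c.

Lemma searches_widen d mem p cost cost' :
  cost <= cost' -> searches d mem p cost -> searches d mem p cost'.
Proof. by move=> le [c R outcome]; exists c => //; apply: reach_widen R. Qed.

Lemma advance_candidate (d i p : 'I_K) mem :
  reach (cfg Advance d i p mem [::])
    (if (mem d).+1 < n then cfg Scan d ord0 d (upd mem d (inord (mem d).+1)) [::]
     else if d == 0 :> nat then cfg Reject d i d mem [::]
     else cfg Advance (inord d.-1) i d mem [::]) k.+1.
Proof.
apply: reach_widen (reach_trans (goto _ _ _ _ _) (reach_step _ (reach0 _ _))) => //;
  first by rewrite addn1.
by rewrite step_act //=; do 2?case: ifP => _; rewrite ?upd_id.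
Qed.

Lemma next_candidate (d : 'I_K) mem p0 i p m1 c0 rest :
  d < k -> ~ completable mem d.+1 0 -> agree m1 mem d.+1 ->
  reach (cfg Scan d ord0 p0 mem [::]) (cfg Advance d i p m1 [::]) c0 ->
  (forall mem', agree mem' mem d -> mem' d = (mem d).+1 :> nat -> mem' d < n ->
     searches d mem' d rest) ->
  searches d mem p0 (c0 + k.+1 + rest).
Proof.
move=> lt_dk dead agree1 R0 next.
have skip : completable mem d (mem d) <-> completable mem d (mem d).+1.
  by rewrite completable_split; split => [[] | ]; [ | | right].
have R1 := reach_trans R0 (advance_candidate d i p m1); rewrite (agree1 d) // in R1.
case: ifP R1 => [lt_n | ge_n] R1; last first.
  exists (if d == 0 :> nat then cfg Reject d i d m1 [::] else cfg Advance (inord d.-1) i d m1 [::]).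
    by apply: reach_widen R1; lia.
  right; split; first by rewrite skip; apply: completable_ge => //; lia.
  by rewrite /backtracked; case: eqP => //= _; exists i, d, m1; split => //; apply: agree_le agree1.
set m2 := upd m1 d _ in R1.
have m2d : m2 d = (mem d).+1 :> nat.
  by rewrite /m2 /upd eqxx inordK //; apply: leq_trans lt_n _; nia.
have agree2 : agree m2 mem d := agree_trans (agree_upd m1 _) (agree_le (leqnSn d) agree1).
have [c R2 outcome] : searches d m2 d rest by apply: next; rewrite ?m2d.
exists c; first exact: reach_trans R1 R2.
have same : completable m2 d (m2 d) <-> completable mem d (mem d).
  by rewrite m2d skip; apply: completable_agree.
case: outcome => [[ok acc] | [ko back]]; [left | right]; split; rewrite -?same //.
move: back; rewrite /backtracked; case: eqP => // _ [i' [p' [mem' [-> agree']]]].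
by exists i', p', mem'; split => //; apply: agree_trans agree' agree2.
Qed.

Lemma open_level (d p : 'I_K) mem : d.+1 < k ->
  reach (cfg Scan d d p mem [::])
    (cfg Scan (inord d.+1) ord0 (inord d.+1) (upd mem (inord d.+1) ord0) [::]) k.+2.
Proof.
move=> lt_d1k.
have scan_end : step clique_machine (cfg Scan d d p mem [::]) =
    Some (cfg Enter (inord d.+1) d p mem [::], false).
  by rewrite step_act //= ltnn (ltn_eqF lt_d1k) upd_id.
apply: reach_step scan_end (reach_widen _ (reach_trans (goto _ _ _ _ _)
  (reach_step _ (reach0 _ _)))) => //; first by rewrite addn1.
by rewrite step_act.
Qed.

(* Per candidate: at most k edge tests of 3k+5 steps, k+2 steps to open the next
   level and k+1 to advance to the next candidate. *)
Definition cand_cost := 4 * K * K.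

Definition level_searchable (d cost : nat) := forall (d' : 'I_K) mem p,
  d' = d :> nat -> d' < k -> prefix_clique mem d' -> mem d' = 0 :> nat ->
  searches d' mem p cost.

Lemma search_candidate (d : 'I_K) Wd rest mem p :
  d < k -> prefix_clique mem d -> mem d < n -> level_searchable d.+1 Wd ->
  (forall mem', agree mem' mem d -> mem' d = (mem d).+1 :> nat -> mem' d < n ->
     searches d mem' d rest) ->
  searches d mem p (cand_cost + Wd + rest).
Proof.
move=> lt_dk pre lt_n deeper next.
have [i1 [p1 [mem1 [agree1 R1]]]] := check_loop (i := ord0) lt_dk p mem (subn0 d) (leq0n d).
have agree1' : agree mem1 mem d.+1 by apply: agree_le agree1.
have le_check : d * (3 * k + 5) <= k * (3 * k + 5) by rewrite leq_mul // ltnW.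
case: ifP R1 => fit R1; last first.
  apply: searches_widen (next_candidate lt_dk _ agree1' R1 next); first by rewrite /cand_cost; nia.
  by move/(completable_fits lt_dk); rewrite fit.
have pre1 := prefix_clique_fits pre lt_n fit.
have [full | not_full] := eqVneq d.+1 k.
  have accept : step clique_machine (cfg Scan d d p1 mem1 [::]) =
      Some (cfg Accept d d p1 mem1 [::], false) by rewrite step_act //= ltnn full eqxx upd_id.
  exists (cfg Accept d d p1 mem1 [::]).
    by apply: reach_widen (reach_trans R1 (reach_step accept (reach0 _ _))); rewrite /cand_cost; nia.
  by left; split => //; apply/completable_split; left; rewrite full; apply: completable_prefix; rewrite -full.
have lt_d1k : d.+1 < k by rewrite ltn_neqAle not_full.
have R2 := open_level p1 mem1 lt_d1k.
set d' : 'I_K := inord d.+1 in R2; set mem2 := upd mem1 d' ord0 in R2.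
have d'E : d' = d.+1 :> nat by rewrite inordK // ltnS ltnW.
have mem2d : mem2 d' = ord0 by rewrite /mem2 /upd eqxx.
have agree2 : agree mem2 mem d'.
  by apply: agree_trans (agree_upd _ _) _; rewrite d'E.
have [c R3 outcome] : searches d' mem2 d' Wd.
  apply: deeper; rewrite ?mem2d ?d'E //.
  by rewrite -d'E; apply: prefix_clique_agree agree2 _; rewrite d'E.
have R := reach_trans R1 (reach_trans R2 R3).
have deeper_iff : completable mem2 d' (mem2 d') <-> completable mem d.+1 0.
  by rewrite mem2d -d'E; apply: completable_agree.
case: outcome => [[ok acc] | [ko]].
  exists c; first by apply: reach_widen R => //; rewrite /cand_cost; nia.
  by left; split => //; apply/completable_split; left; apply/deeper_iff.
rewrite /backtracked d'E /= => -[i' [p' [mem' [c_eq agree']]]].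
rewrite c_eq inord_val in R.
apply: searches_widen (next_candidate lt_dk _ _ R next); first by rewrite /cand_cost; nia.
  by rewrite -deeper_iff.
by apply: agree_trans agree' _; rewrite -d'E.
Qed.

Lemma search_level (d : 'I_K) Wd w : d < k -> level_searchable d.+1 Wd ->
  forall (mem : 'I_K -> 'I_N) p, n - mem d = w -> prefix_clique mem d -> mem d < n ->
  searches d mem p (w * (cand_cost + Wd)).
Proof.
move=> lt_dk deeper; elim: w => [|w IH] mem p dist pre lt_n; first by exfalso; lia.
rewrite mulSn; apply: search_candidate => // mem' agree' mem'd lt'.
by apply: IH; [lia | apply: prefix_clique_agree agree' pre | ].
Qed.

Fixpoint level_cost r := if r is r'.+1 then n * (cand_cost + level_cost r') else 0.

Lemma search_from r d : 0 < n -> k - d = r.+1 -> level_searchable d (level_cost r.+1).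
Proof.
move=> n_gt0; elim: r d => [|r IH] d dist d' mem p d'E lt_k pre zero /=;
  apply: (search_level (w := n) lt_k); rewrite ?zero ?subn0 //.
- by move=> d'' ? ? d''E lt''; exfalso; lia.
- by apply: IH; lia.
Qed.

Lemma completable0 mem : completable mem 0 0 <-> exists y, clique_seq y.
Proof. by split => [[y cl _] | [y cl]]; exists y. Qed.

Lemma run_from_start : 0 < k -> k <= n ->
  exists2 c, reach (init_config clique_machine G) c (level_cost k).+2 &
    (exists y, clique_seq y) /\ ctrl_kind (c_state c) = KAccept \/
    ~ (exists y, clique_seq y) /\ ctrl_kind (c_state c) = KReject.
Proof.
move=> k_gt0 le_kn; set mem0 : 'I_K -> 'I_N := fun _ => ord0.
have -> : init_config clique_machine G = cfg Start ord0 ord0 ord0 mem0 [::] by [].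
have start : step clique_machine (cfg Start ord0 ord0 ord0 mem0 [::]) =
    Some (cfg Enter ord0 ord0 ord0 mem0 [::], false).
  by rewrite step_act //= ?upd_id // (gtn_eqF k_gt0) ltnNge le_kn.
have enter : step clique_machine (cfg Enter ord0 ord0 ord0 mem0 [::]) =
    Some (cfg Scan ord0 ord0 ord0 (upd mem0 ord0 ord0) [::], false) by rewrite step_act.
have [c R outcome] : searches ord0 (upd mem0 ord0 ord0) ord0 (level_cost k).
  have dist : k - 0 = k.-1.+1 by rewrite subn0 prednK.
  have := search_from (leq_trans k_gt0 le_kn) dist; rewrite prednK // => search0.
  exact: search0.
exists c; first exact: reach_step start (reach_step enter R).
by rewrite /upd eqxx completable0 in outcome.
Qed.

Lemma clique_seq_of_clique : has_clique G k -> exists y, clique_seq y.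
Proof.
move=> [S [card_S clique]]; set e := [seq nat_of_ord x | x <- enum S].
have size_e : size e = k by rewrite size_map -cardE.
have uniq_e : uniq e by rewrite map_inj_uniq ?enum_uniq //; apply: ord_inj.
have in_S j : j < k -> exists2 x, x \in S & nth 0 e j = x.
  move=> lt_jk; have : nth 0 e j \in e by rewrite mem_nth // size_e.
  by case/mapP => x; rewrite mem_enum => Sx ->; exists x.
exists (nth 0 e); split => [j lt_jk | a b lt_ab lt_bk].
  by have [x _ ->] := in_S j lt_jk.
have lt_ak := ltn_trans lt_ab lt_bk.
have [x Sx ex] := in_S a lt_ak; have [y Sy ey] := in_S b lt_bk.
have : nth 0 e a != nth 0 e b by rewrite nth_uniq ?size_e // neq_ltn lt_ab.
rewrite ex ey edge_ord => ne; apply: clique => //.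
Qed.

Lemma clique_of_clique_seq : symmetric G -> irreflexive G ->
  (exists y, clique_seq y) -> has_clique G k.
Proof.
move=> sym irr [y [lt_n adj]]; pose f (j : 'I_k) : 'I_n := Ordinal (lt_n j (ltn_ord j)).
have adj_f (a b : 'I_k) : a != b -> G (f a) (f b).
  rewrite neq_ltn => /orP [lt_ab | lt_ba]; last rewrite sym.
    by rewrite -edge_ord; apply: adj.
  by rewrite -edge_ord; apply: adj.
have inj_f : injective f.
  by move=> a b eq_f; apply/eqP; apply: contraT => /adj_f; rewrite eq_f irr.
exists [set f j | j in 'I_k]; split; first by rewrite card_imset // card_ord.
move=> _ _ /imsetP [a _ ->] /imsetP [b _ ->] ne; apply: adj_f.
by apply: contra ne => /eqP ->.
Qed.

Lemma level_cost_le r : 1 < n -> level_cost r + 2 * cand_cost <= 2 * cand_cost * n ^ r.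
Proof.
move=> n_gt1; elim: r => [|r IH] /=; first by rewrite expn0 muln1.
by rewrite expnS; have := leq_mul (leqnn n) IH; nia.
Qed.

Lemma level_cost_bound : 0 < k -> k <= n -> (level_cost k).+2 <= 34 * (k ^ 2 * n ^ k).
Proof.
move=> k_gt0 le_kn; case: (ltnP 1 n) => [n_gt1 | le_n1].
  have cand_le : cand_cost * n ^ k <= 16 * (k ^ 2 * n ^ k).
    by rewrite mulnA leq_mul // /cand_cost; nia.
  have pos : 0 < k ^ 2 * n ^ k by rewrite muln_gt0 !expn_gt0 k_gt0; lia.
  have := level_cost_le k n_gt1; rewrite -mulnA; lia.
have [k1 n1] : k = 1 /\ n = 1 by lia.
by rewrite {1}k1 /= /cand_cost k1 n1.
Qed.

Lemma clique_machine_decides : symmetric G -> irreflexive G ->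
  exists2 c, reach (init_config clique_machine G) c (34 * (k ^ 2 * n ^ k)) &
    halted clique_machine c /\ (accepted clique_machine c <-> has_clique G k).
Proof.
move=> sym irr.
have [k0 | k_gt0] := posnP k.
  exists (init_config clique_machine G); first exact: reach_widen (reach0 _ _).
  rewrite /halted /accepted /= k0; split => //; split => // _.
  by exists set0; split => [| u]; rewrite ?cards0 ?in_set0.
have [lt_nk | le_kn] := ltnP n k.
  exists (init_config clique_machine G); first exact: reach_widen (reach0 _ _).
  rewrite /halted /accepted /= (gtn_eqF k_gt0) lt_nk; split => //; split => // -[S [card_S _]].
  by have := max_card S; rewrite card_ord card_S; lia.
have [c R outcome] := run_from_start k_gt0 le_kn.
exists c; first exact: reach_widen (level_cost_bound k_gt0 le_kn) R.
have clique_iff : has_clique G k <-> exists y, clique_seq y.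
  by split; [apply: clique_seq_of_clique | apply: clique_of_clique_seq].
by rewrite /halted /accepted clique_iff /=; case: outcome => [[? ->] | [? ->]].
Qed.

End CliqueMachine.

Theorem lemma2 :
  exists C : nat, forall k : nat, exists Q : finType, forall n : nat,
    exists T : tmtlm Q (alph n) k.+1,
      forall G : rel 'I_n, symmetric G -> irreflexive G ->
        exists (t io : nat) (cf : config Q (alph n) k.+1),
          [/\ runs T (init_config T G) t io cf,
              halted T cf,
              accepted T cf <-> has_clique G k,
              t <= C * (k ^ 2 * n ^ k)
            & io <= C * (k ^ 2 * n ^ k)].
Proof.
exists 34 => k; exists (ctrl k) => n; exists (clique_machine k n) => G sym irr.
have [c [t [io [R cost]]] [halt acc]] := @clique_machine_decides k n G sym irr.
by exists t, io, c; split => //; lia.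
Qed.
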